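(* Let $E$ be a graph with finitely many vertices and $K$ a field of characteristic $0$. Let $H\subseteq E^0$ be hereditary and saturated, $w\in B_H$ a breaking vertex with $M(w)=E^0\setminus H$, and $P=I(H,B_H\setminus\{w\})$ (a primitive ideal of ''type I''). Assume $L_K(E)/P$ is noncommutative. Then there exists $f\in E^1$ with $r(f)=w$ such that $\langle 1+2w^Hf^*,\ 1+2fw^H\rangle$ is a non-cyclic free subgroup of $L_K(E)^\times$.
   Context: A graph $E=(E^0,E^1,r,s)$; $L_K(E)$ is the free associative $K$-algebra on $E^0\cup E^1\cup\{e^*\}$ subject to $vv'=\delta_{v,v'}v$, $s(e)e=er(e)=e$, $r(e)e^*=e^*s(e)=e^*$, $e^*f=\delta_{e,f}r(e)$, and $v=\sum_{s(e)=v}ee^*$ for every regular vertex $v$ (emitting a finite nonzero number of edges); with $E^0$ finite it is unital with $1=\sum_v v$. Write $u\ge v$ if there is a path from $u$ to $v$; $M(v)=\{u\in E^0:u\ge v\}$. $H$ hereditary: $u\in H$, $u\ge v\Rightarrow v\in H$; saturated: for regular $v$, $r(s^{-1}(v))\subseteq H\Rightarrow v\in H$. A breaking vertex of $H$ is an infinite emitter $w\notin H$ with $1\le|s^{-1}(w)\cap r^{-1}(E^0\setminus H)|<\infty$; $B_H$ is the set of them; $w^H=w-\sum_{s(e)=w,\,r(e)\notin H}ee^*$. For $S\subseteq B_H$, $I(H,S)$ is the ideal of $L_K(E)$ generated by $H\cup\{v^H:v\in S\}$. *)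

From HB Require Import structures.
From mathcomp Require Import all_boot all_order all_algebra.
Set Implicit Arguments. Unset Strict Implicit. Unset Printing Implicit Defensive.
Import Order.TTheory GRing.Theory Num.Theory.
Local Open Scope ring_scope.

(* A graph E = (E^0, E^1, r, s): vertices V (finite), edges Ed (arbitrary
   type with decidable equality, possibly infinite), source s, range r. *)

Definition enumerates (Ed : eqType) (P : Ed -> Prop) (l : seq Ed) : Prop :=
  uniq l /\ forall e, P e <-> e \in l.

Definition regular_vertex (V : finType) (Ed : eqType) (s : Ed -> V) (v : V) :=
  exists l, enumerates (fun e => s e = v) l /\ l != [::].

Definition infinite_emitter (V : finType) (Ed : eqType) (s : Ed -> V) (v : V) :=
  ~ exists l, enumerates (fun e => s e = v) l.

Inductive path_geq (V : finType) (Ed : eqType) (s r : Ed -> V) : V -> V -> Prop :=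
  | pg_refl u : path_geq s r u u
  | pg_step e v : path_geq s r (r e) v -> path_geq s r (s e) v.

Definition hereditary (V : finType) (Ed : eqType) (s r : Ed -> V) (H : {set V}) :=
  forall u v, u \in H -> path_geq s r u v -> v \in H.

Definition saturated (V : finType) (Ed : eqType) (s r : Ed -> V) (H : {set V}) :=
  forall v, regular_vertex s v -> (forall e, s e = v -> r e \in H) -> v \in H.

Definition breaking_vertex (V : finType) (Ed : eqType) (s r : Ed -> V)
    (H : {set V}) (w : V) :=
  w \notin H /\ infinite_emitter s w /\
  exists l, enumerates (fun e => s e = w /\ r e \notin H) l /\ l != [::].

Definition leavitt_family (K : fieldType) (V : finType) (Ed : eqType)
    (s r : Ed -> V) (A : algType K) (pv : V -> A) (pe ps : Ed -> A) : Prop :=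
  [/\ (forall v v', pv v * pv v' = if v == v' then pv v else 0),
      (forall e, pv (s e) * pe e = pe e /\ pe e * pv (r e) = pe e),
      (forall e, pv (r e) * ps e = ps e /\ ps e * pv (s e) = ps e),
      (forall e f, ps e * pe f = if e == f then pv (r e) else 0) &
      (forall v l, enumerates (fun e => s e = v) l -> l != [::] ->
          pv v = \sum_(e <- l) pe e * ps e)].

(* (not necessarily unital) K-algebra homomorphism *)
Definition alg_hom (K : fieldType) (A B : algType K) (phi : A -> B) : Prop :=
  [/\ (forall x y, phi (x + y) = phi x + phi y),
      (forall (k : K) x, phi (k *: x) = k *: phi x) &
      (forall x y, phi (x * y) = phi x * phi y)].

(* (A, pv, pe, ps) is the Leavitt path algebra L_K(E): the universal
   K-algebra generated by a Leavitt E-family (i.e. the free associative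
   K-algebra on E^0, E^1, (E^1)^* modulo the Leavitt relations). *)
Definition is_leavitt_path_algebra (K : fieldType) (V : finType) (Ed : eqType)
    (s r : Ed -> V) (A : algType K) (pv : V -> A) (pe ps : Ed -> A) : Prop :=
  leavitt_family s r pv pe ps /\
  forall (B : algType K) (qv : V -> B) (qe qs : Ed -> B),
    leavitt_family s r qv qe qs ->
    (exists phi : A -> B, alg_hom phi /\
       (forall v, phi (pv v) = qv v) /\
       (forall e, phi (pe e) = qe e) /\ (forall e, phi (ps e) = qs e)) /\
    (forall phi psi : A -> B, alg_hom phi -> alg_hom psi ->
       (forall v, phi (pv v) = psi (pv v)) ->
       (forall e, phi (pe e) = psi (pe e)) ->
       (forall e, phi (ps e) = psi (ps e)) ->
       forall x, phi x = psi x).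

Definition ring_ideal (R : pzRingType) (I : R -> Prop) : Prop :=
  [/\ I 0, (forall x y, I x -> I y -> I (x + y)) &
      (forall a x, I x -> I (a * x) /\ I (x * a))].

Definition ideal_generated (R : pzRingType) (X : R -> Prop) (x : R) : Prop :=
  forall I : R -> Prop, ring_ideal I -> (forall y, X y -> I y) -> I x.

(* generators of I(H, S): H together with v^H for v in S *)
Definition IHS_generators (K : fieldType) (V : finType) (Ed : eqType)
    (s r : Ed -> V) (A : algType K) (pv : V -> A) (pe ps : Ed -> A)
    (H : {set V}) (S : V -> Prop) (x : A) : Prop :=
  (exists v, v \in H /\ x = pv v) \/
  (exists v l, S v /\ enumerates (fun e => s e = v /\ r e \notin H) l /\
     x = pv v - \sum_(e <- l) pe e * ps e).

Definition letter_val (R : unitRingType) (l : R * bool) : R :=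
  if l.2 then l.1 else l.1^-1.

Definition word_val (R : unitRingType) (w : seq (R * bool)) : R :=
  \prod_(l <- w) letter_val l.

Fixpoint reduced_word (R : unitRingType) (w : seq (R * bool)) : bool :=
  match w with
  | x :: ((y :: _) as t) => ~~ ((x.1 == y.1) && (x.2 != y.2)) && reduced_word t
  | _ => true
  end.

Definition subgroup_gen (R : unitRingType) (S : R -> Prop) (g : R) : Prop :=
  exists w : seq (R * bool), (forall l, l \in w -> S l.1) /\ g = word_val w.

Definition free_subgroup (R : unitRingType) (G : R -> Prop) : Prop :=
  exists X : R -> Prop,
    (forall x, X x -> x \is a GRing.unit) /\
    (forall g, G g <-> subgroup_gen X g) /\
    (forall w : seq (R * bool), w != [::] -> reduced_word w ->
        (forall l, l \in w -> X l.1) -> word_val w != 1).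

Definition cyclic_subgroup (R : unitRingType) (G : R -> Prop) : Prop :=
  exists g : R, forall h, G h <-> exists n : int, h = g ^ n.

From HB Require Import structures.
From mathcomp Require Import all_boot all_order all_algebra.
From mathcomp Require Import boolp zify.
Set Implicit Arguments. Unset Strict Implicit. Unset Printing Implicit Defensive.
Import Order.TTheory GRing.Theory.
Local Open Scope ring_scope.

(* Put x := w^H f^* and y := f w^H for an edge f with r(f) = w.  Then
   x^2 = y^2 = 0, xyx = x and yxy = y, so xy, x, y, yx are 2x2 matrix units
   and M |-> (1 - xy - yx) + sum_ij E_ij M_ij is a unital ring embedding of
   M_2(Z) into L_K(E): it is injective because char K = 0 and xy = w^H <> 0.
   It maps [[1,2],[0,1]] and [[1,0],[2,1]] to 1 + 2x and 1 + 2y, which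
   generate a free group by Sanov's ping-pong argument.  Finally w^H <> 0
   because L_K(E) acts on functions on the paths ending at w: as w is an
   infinite emitter no Cuntz-Krieger relation holds at w, and w^H acts as
   the identity at the empty path. *)

Lemma unitr_inv_eq (R : unitRingType) (x y : R) :
  x * y = 1 -> y * x = 1 -> x \is a GRing.unit /\ x^-1 = y.
Proof.
move=> xy yx; have xU : x \is a GRing.unit by apply/unitrP; exists y.
by split; rewrite // -[y]mul1r -(mulVr xU) -mulrA xy mulr1.
Qed.

Lemma mul1Dz_sqr0 (R : pzRingType) (z : R) m n : z * z = 0 ->
  (1 + z *~ m) * (1 + z *~ n) = 1 + z *~ (m + n).
Proof.
move=> z2; rewrite mulrDl !mulrDr !mul1r !mulr1 mulrzAl mulrzAr -mulrzA z2 mul0rz addr0.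
by rewrite mulrzDr addrA addrAC.
Qed.

Lemma unit1Dz_sqr0 (R : unitRingType) (z : R) n : z * z = 0 ->
  1 + z *~ n \is a GRing.unit /\ (1 + z *~ n)^-1 = 1 + z *~ (- n).
Proof.
move=> z2; apply: unitr_inv_eq; rewrite mul1Dz_sqr0 //;
  by rewrite ?subrr ?addNr mulr0z addr0.
Qed.

Lemma word_val_cons (R : unitRingType) (l : R * bool) w :
  word_val (l :: w) = letter_val l * word_val w.
Proof. by rewrite /word_val big_cons. Qed.

Lemma reduced_word_cons2 (R : unitRingType) (l m : R * bool) w :
  reduced_word [:: l, m & w] = ~~ ((l.1 == m.1) && (l.2 != m.2)) && reduced_word (m :: w).
Proof. by []. Qed.

Section Words.
Variable R : unitRingType.

Lemma word_val_map (S : unitRingType) (f : R -> S) (w : seq (R * bool)) :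
  f 1 = 1 -> {morph f : u v / u * v} ->
  (forall l, l \in w -> l.1 \is a GRing.unit) ->
  word_val [seq (f l.1, l.2) | l <- w] = f (word_val w).
Proof.
move=> f1 fM; elim: w => [|[u b] w IH] Uw; first by rewrite /word_val !big_nil f1.
rewrite map_cons !word_val_cons IH ?fM => [|l lw]; last by apply: Uw; rewrite inE lw orbT.
have uU : u \is a GRing.unit by apply: (Uw (u, b)); rewrite inE eqxx.
rewrite /letter_val /=; case: b {Uw} => //; congr (_ * _).
by rewrite (unitr_inv_eq (y := f u^-1) _ _).2 // -fM ?mulrV ?mulVr.
Qed.

Lemma reduced_word_map (S : unitRingType) (f : R -> S) (w : seq (R * bool)) :
  {in [seq l.1 | l <- w] &, injective f} ->
  reduced_word [seq (f l.1, l.2) | l <- w] = reduced_word w.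
Proof.
elim: w => [//|l w IH]; case: w IH => [//|m w] IH finj.
rewrite [LHS](reduced_word_cons2 (f l.1, l.2)) reduced_word_cons2 -IH /=.
  by rewrite (inj_in_eq finj) // !inE eqxx ?orbT.
by move=> u v uw vw; apply: finj; rewrite inE ?uw ?vw orbT.
Qed.

Definition free_on (X : R -> Prop) :=
  forall w : seq (R * bool), w != [::] -> reduced_word w ->
    (forall l, l \in w -> X l.1) -> word_val w != 1.

Lemma free_subgroup_gen (X : R -> Prop) :
  (forall x, X x -> x \is a GRing.unit) -> free_on X -> free_subgroup (subgroup_gen X).
Proof. by move=> XU Xfree; exists X. Qed.

Lemma subgroup_gen_mem (X : R -> Prop) x : X x -> subgroup_gen X x.
Proof.
by move=> Xx; exists [:: (x, true)]; rewrite word_val_cons /word_val big_nil mulr1;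
  split=> // l; rewrite inE => /eqP ->.
Qed.

Lemma free_pair_not_cyclic (a b : R) :
  a \is a GRing.unit -> b \is a GRing.unit -> a != b ->
  free_on (fun x => x = a \/ x = b) ->
  ~ cyclic_subgroup (subgroup_gen (fun x => x = a \/ x = b)).
Proof.
move=> aU bU ab abfree [g gen].
have [m am] := (gen a).1 (subgroup_gen_mem (or_introl erefl)).
have [n bn] := (gen b).1 (subgroup_gen_mem (or_intror erefl)).
have ab_comm : GRing.comm a b by rewrite am bn; apply/commrXz/commr_sym/commrXz.
have := abfree [:: (a, true); (b, true); (a, false); (b, false)].
rewrite /= (negbTE ab) eq_sym (negbTE ab) /= !word_val_cons /word_val big_nil /=.
rewrite /letter_val /= mulr1 mulrA ab_comm -mulrA mulVKr // divrr // eqxx.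
have letters l : l \in [:: (a, true); (b, true); (a, false); (b, false)] -> l.1 = a \/ l.1 = b.
  by rewrite !inE => /or4P[] /eqP->; [left|right|left|right].
by move/(_ isT isT letters).
Qed.

End Words.

Section MatrixUnits.
Variables (R : nzRingType) (n : nat) (E : 'I_n -> 'I_n -> R).
Hypothesis E_mul : forall i j k l, E i j * E k l = if j == k then E i l else 0.

Lemma mxunit_neq0 a b i j : E a b != 0 -> E i j != 0.
Proof.
have -> : E a b = E a i * (E i j * E j b) by rewrite E_mul eqxx E_mul eqxx.
by apply: contraNneq => ->; rewrite mul0r mulr0.
Qed.

Definition mxunit_map (M : 'M[int]_n) : R := \sum_i \sum_j E i j *~ M i j.

Lemma mxunit_mapD M N : mxunit_map (M + N) = mxunit_map M + mxunit_map N.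
Proof.
rewrite /mxunit_map -big_split; apply: eq_bigr => i _.
by rewrite -big_split; apply: eq_bigr => j _; rewrite !mxE mulrzDr.
Qed.

Lemma mxunit_mapB M N : mxunit_map (M - N) = mxunit_map M - mxunit_map N.
Proof.
rewrite /mxunit_map -sumrB; apply: eq_bigr => i _.
by rewrite -sumrB; apply: eq_bigr => j _; rewrite !mxE mulrzBr.
Qed.

Lemma mxunit_map_deltaz a b c : mxunit_map (delta_mx a b *~ c) = E a b *~ c.
Proof.
rewrite /mxunit_map (bigD1 a) //= [X in _ + X]big1 ?addr0 => [|i ia].
  rewrite (bigD1 b) //= [X in _ + X]big1 ?addr0 => [|j jb].
    by rewrite -scaler_int !mxE !eqxx intz mulr1.
  by rewrite -scaler_int !mxE (negbTE jb) andbF mulr0.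
by rewrite big1 // => j _; rewrite -scaler_int !mxE (negbTE ia) mulr0.
Qed.

Lemma mxunit_mapM M N : mxunit_map (M *m N) = mxunit_map M * mxunit_map N.
Proof.
rewrite /mxunit_map mulr_suml; apply: eq_bigr => i _.
rewrite mulr_suml.
under eq_bigr do rewrite mxE mulrz_sumr.
rewrite exchange_big /=; apply: eq_bigr => j _.
rewrite [RHS]mulr_sumr [RHS](bigD1 j) //= [X in _ + X]big1 ?addr0 => [|k kj]; rewrite mulr_sumr.
  by apply: eq_bigr => l _; rewrite mulrzAl mulrzAr E_mul eqxx -mulrzA mulrC.
by rewrite big1 // => l _; rewrite mulrzAl mulrzAr E_mul eq_sym (negbTE kj) !mul0rz.
Qed.

Lemma mxunit_map_corner a b M : E a a * mxunit_map M * E b b = E a b *~ M a b.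
Proof.
have term i j : E a a * (E i j *~ M i j) * E b b =
    if (i == a) && (j == b) then E a b *~ M a b else 0.
  rewrite mulrzAr mulrzAl E_mul eq_sym.
  case: (eqVneq i a) => [->|_]; last by rewrite mul0r mul0rz.
  by rewrite E_mul; case: (eqVneq j b) => [->|_]; rewrite ?mul0rz.
rewrite /mxunit_map mulr_sumr mulr_suml (bigD1 a) //= [X in _ + X]big1 ?addr0 => [|i ia].
  rewrite mulr_sumr mulr_suml (bigD1 b) //= [X in _ + X]big1 ?addr0 => [|j jb].
    by rewrite term !eqxx.
  by rewrite term eqxx (negbTE jb).
by rewrite mulr_sumr mulr_suml big1 // => j _; rewrite term (negbTE ia).
Qed.

(* [1 - mxunit_map 1] is the idempotent complementary to the corner spanned
   by the matrix units; adding it makes the map unital. *)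
Definition mxunit_morph M := 1 - mxunit_map 1%:M + mxunit_map M.

Lemma mxunit_morph1 : mxunit_morph 1%:M = 1.
Proof. exact: subrK. Qed.

Lemma mxunit_morphM M N : mxunit_morph (M *m N) = mxunit_morph M * mxunit_morph N.
Proof.
set e := mxunit_map 1%:M.
have eP P : e * mxunit_map P = mxunit_map P by rewrite -mxunit_mapM mul1mx.
have Pe P : mxunit_map P * e = mxunit_map P by rewrite -mxunit_mapM mulmx1.
have u2 : (1 - e) * (1 - e) = 1 - e by rewrite mulrBl mul1r mulrBr mulr1 eP subrr subr0.
have uN : (1 - e) * mxunit_map N = 0 by rewrite mulrBl mul1r eP subrr.
have Mu : mxunit_map M * (1 - e) = 0 by rewrite mulrBr mulr1 Pe subrr.
by rewrite /mxunit_morph -/e mxunit_mapM mulrDl !(mulrDr _ (1 - e)) u2 uN Mu addr0 add0r.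
Qed.

Lemma mxunit_morph_shear a b c :
  mxunit_morph (1%:M + delta_mx a b *~ c) = 1 + E a b *~ c.
Proof. by rewrite /mxunit_morph mxunit_mapD mxunit_map_deltaz addrA subrK. Qed.

Lemma mxunit_morph_eq1 M : (forall i j c, E i j *~ c = 0 -> c = 0) ->
  mxunit_morph M = 1 -> M = 1%:M.
Proof.
move=> E_torsionfree M1.
have D0 : mxunit_map (M - 1%:M) = 0.
  rewrite mxunit_mapB -[mxunit_map M](addKr (1 - mxunit_map 1%:M)) [_ + mxunit_map M]M1.
  by rewrite opprB subrK subrr.
apply/matrixP => i j; apply/eqP; rewrite -subr_eq0; apply/eqP/(E_torsionfree i j).
by have := mxunit_map_corner i j (M - 1%:M); rewrite D0 mulr0 mul0r !mxE => ->.
Qed.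

End MatrixUnits.

Lemma delta_mx_sqr0 (R : pzRingType) n (i j : 'I_n.+1) :
  i != j -> delta_mx i j * delta_mx i j = 0 :> 'M[R]_n.+1.
Proof. by move=> ij; apply: mul_delta_mx_0; rewrite eq_sym. Qed.

Lemma mul_shear_col n (i j : 'I_n) (c : int) (v : 'cV[int]_n) k :
  ((1%:M + delta_mx i j *~ c) *m v) k 0 = v k 0 + (k == i)%:R * c * v j 0.
Proof.
rewrite mulmxDl mul1mx -scaler_int -scalemxAl !mxE (bigD1 j) //= big1 ?addr0.
  by rewrite !mxE eqxx andbT intz mulrA (mulrC c).
by move=> l lj; rewrite !mxE (negbTE lj) andbF mul0r.
Qed.

Definition sanovA : 'M[int]_2 := 1 + delta_mx 0 1 *~ 2.
Definition sanovB : 'M[int]_2 := 1 + delta_mx 1 0 *~ 2.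
Definition sanov_letter (l : 'M[int]_2 * bool) := l.1 = sanovA \/ l.1 = sanovB.

Lemma sanovA_neqB : (sanovB == sanovA) = false.
Proof. by apply/eqP => /matrixP/(_ 0 1); rewrite !mxE. Qed.

Lemma letter_val_shear (i j : 'I_2) s : i != j ->
  letter_val (1 + delta_mx i j *~ 2 : 'M[int]_2, s) = 1 + delta_mx i j *~ (if s then 2 else -2).
Proof.
by case: s => // ij; rewrite /letter_val /= (unit1Dz_sqr0 _ (delta_mx_sqr0 _ ij)).2.
Qed.

Lemma sanov_letter_unit l : sanov_letter l -> l.1 \is a GRing.unit.
Proof. by case=> ->; apply: (unit1Dz_sqr0 _ (delta_mx_sqr0 _ _)).1. Qed.

(* With (u, t) the coordinates of v: sanovA^(+-1) maps every cone except the
   one of sanovA^(-+1) into the cone |t| < |u|, sign(ut) = +-, and sanovB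
   does the same with u and t exchanged, each time increasing |u| + |t|. *)
Definition pingpong_cone (l : 'M[int]_2 * bool) (v : 'cV[int]_2) : Prop :=
  let u := v 0 0 in let t := v 1 0 in
  if l.1 == sanovA then
    if l.2 then (0 < t /\ t < u) \/ (t < 0 /\ u < t)
    else (0 < t /\ u < - t) \/ (t < 0 /\ - t < u)
  else
    if l.2 then (0 < u /\ u < t) \/ (u < 0 /\ t < u)
    else (0 < u /\ t < - u) \/ (u < 0 /\ - u < t).

Definition pingpong_point (l : 'M[int]_2 * bool) : 'cV[int]_2 :=
  \col_i (if (i == 0) == (l.1 == sanovA) then 2 else if l.2 then 1 else -1).

Lemma pingpong_point_cone l : pingpong_cone l (pingpong_point l).
Proof. by rewrite /pingpong_cone !mxE; case: (l.1 == sanovA); case: l.2 => /=; lia. Qed.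

Definition l1norm (v : 'cV[int]_2) : int := `|v 0 0| + `|v 1 0|.

Lemma pingpong_step l m v : sanov_letter l -> sanov_letter m ->
  ~~ ((l.1 == m.1) && (l.2 != m.2)) ->
  pingpong_cone m v ->
  pingpong_cone l (letter_val l *m v) /\ l1norm v < l1norm (letter_val l *m v).
Proof.
case: l m => [M s] [N t] [] /= -> [] /= ->; rewrite letter_val_shear //;
  rewrite /pingpong_cone /l1norm !mul_shear_col /= ?eqxx ?sanovA_neqB eq_sym ?sanovA_neqB /=;
  by case: s; case: t => /=; lia.
Qed.

Lemma pingpong_word l w m v : sanov_letter m ->
  (forall k, k \in l :: w -> sanov_letter k) -> reduced_word (l :: w) ->
  ~~ (((last l w).1 == m.1) && ((last l w).2 != m.2)) -> pingpong_cone m v ->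
  pingpong_cone l (word_val (l :: w) *m v) /\ l1norm v < l1norm (word_val (l :: w) *m v).
Proof.
move=> mS; elim: w l => [|k w IH] l lwS.
  move=> _ lm mv; rewrite word_val_cons /word_val big_nil mulr1.
  by apply: pingpong_step mS lm mv; apply: lwS; rewrite mem_head.
rewrite reduced_word_cons2 => /andP[lk red] klast mv.
have [kv ltv] : pingpong_cone k (word_val (k :: w) *m v) /\
    l1norm v < l1norm (word_val (k :: w) *m v).
  by apply: IH => // j jw; apply: lwS; rewrite inE jw orbT.
rewrite word_val_cons -mulmxE -mulmxA.
have kS : sanov_letter k by apply: lwS; rewrite !inE eqxx orbT.
have [lv ltk] := pingpong_step (lwS l (mem_head _ _)) kS lk kv.
by split=> //; apply: lt_trans ltk.
Qed.

Theorem sanov_free : free_on (fun M : 'M[int]_2 => M = sanovA \/ M = sanovB).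
Proof.
case=> [//|l w] _ red wS; apply/eqP => w1.
have lastS : sanov_letter (last l w) by apply: wS; rewrite mem_last.
have noncancel : ~~ (((last l w).1 == (last l w).1) && ((last l w).2 != (last l w).2)).
  by rewrite !eqxx.
have [_] := pingpong_word lastS wS red noncancel (pingpong_point_cone (last l w)).
by rewrite w1 mul1mx ltxx.
Qed.

Lemma pchar0_mulrz_eq0 (K : fieldType) (V : lmodType K) (v : V) (c : int) :
  [pchar K] =i pred0 -> (v *~ c == 0) = (v == 0) || (c == 0).
Proof.
move=> K0; rewrite -scaler_int scaler_eq0 orbC; congr (_ || _).
have natr_eq0 n : (n%:R == 0 :> K) = (n == 0)%N := (pcharf0P K).1 K0 n.
by case: c => n; rewrite ?NegzE ?intrN ?oppr_eq0 -pmulrn natr_eq0.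
Qed.

Section SquareZeroPair.
Variables (K : fieldType) (A : unitAlgType K) (x y : A).
Hypotheses (x2 : x * x = 0) (y2 : y * y = 0) (xyx : x * y * x = x) (yxy : y * x * y = y).

Definition pair_mxunit (i j : 'I_2) : A :=
  if i == 0 then (if j == 0 then x * y else x) else (if j == 0 then y else y * x).

Lemma pair_mxunit_mul i j k l :
  pair_mxunit i j * pair_mxunit k l = if j == k then pair_mxunit i l else 0.
Proof.
have ord2 (h : 'I_2) : h = 0 \/ h = 1 by case: h => [[|[|//]] ?]; [left|right]; apply: val_inj.
rewrite /pair_mxunit.
case: (ord2 i) => ->; case: (ord2 j) => ->; case: (ord2 k) => ->; case: (ord2 l) => -> /=;
  rewrite ?mulrA ?x2 ?y2 ?mul0r ?xyx ?yxy //;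
  by rewrite -?(mulrA _ y y) -?(mulrA _ x x) ?x2 ?y2 ?mulr0 ?mul0r.
Qed.

Lemma pair_shears_neq : [pchar K] =i pred0 -> x * y != 0 -> 1 + x *~ 2 != 1 + y *~ 2.
Proof.
move=> K0 xy0; apply: contra_neq xy0 => /addrI /(congr1 (fun z => x * z)).
rewrite !mulrzAr x2 mul0rz => /esym/eqP; rewrite pchar0_mulrz_eq0 // orbF.
by move/eqP.
Qed.

Lemma pair_shears_free : [pchar K] =i pred0 -> x * y != 0 ->
  free_on (fun z => z = 1 + x *~ 2 \/ z = 1 + y *~ 2).
Proof.
move=> K0 xy0 w wn0 red wl.
pose psi := mxunit_morph pair_mxunit.
have psiA : psi sanovA = 1 + x *~ 2 by rewrite /psi mxunit_morph_shear.
have psiB : psi sanovB = 1 + y *~ 2 by rewrite /psi mxunit_morph_shear.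
have psi_eq1 M : psi M = 1 -> M = 1.
  apply: (mxunit_morph_eq1 pair_mxunit_mul) => i j c /eqP; rewrite pchar0_mulrz_eq0 //.
  by rewrite (negbTE (mxunit_neq0 pair_mxunit_mul i j (a := 0) (b := 0) xy0)) => /eqP.
pose lift z := if z == 1 + x *~ 2 then sanovA else sanovB.
have psi_lift l : l \in w -> psi (lift l.1) = l.1.
  by case/wl=> ->; rewrite /lift ?eqxx ?psiA // eq_sym (negbTE (pair_shears_neq K0 xy0)) psiB.
have lift_inj : {in [seq l.1 | l <- w] &, injective lift}.
  move=> u v /mapP[l lw ->] /mapP[k kw ->] eq_lift.
  by rewrite -(psi_lift l lw) -(psi_lift k kw) eq_lift.
pose w' := [seq (lift l.1, l.2) | l <- w].
have -> : w = [seq (psi l.1, l.2) | l <- w'].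
  rewrite -map_comp -[LHS]map_id; apply/eq_in_map => -[u b] lw /=.
  by rewrite (psi_lift (u, b) lw).
have w'S l : l \in w' -> sanov_letter l.
  by case/mapP=> k _ ->; rewrite /sanov_letter /lift /=; case: ifP; [left|right].
rewrite word_val_map => [||M N|l /w'S/sanov_letter_unit //].
- apply: contra_neq (psi_eq1 _) (sanov_free _ _ w'S); first by rewrite -size_eq0 size_map size_eq0.
  by rewrite reduced_word_map.
- exact: mxunit_morph1.
- exact: (mxunit_morphM pair_mxunit_mul M N).
Qed.

Lemma pair_shears_free_group : [pchar K] =i pred0 -> x * y != 0 ->
  let a := 1 + 2%:R * x in let b := 1 + 2%:R * y in
  [/\ a \is a GRing.unit, b \is a GRing.unit,
      free_subgroup (subgroup_gen (fun z => z = a \/ z = b)) &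
      ~ cyclic_subgroup (subgroup_gen (fun z => z = a \/ z = b))].
Proof.
move=> K0 xy0 a b; rewrite {}/a {}/b !mulr_natl.
have [aU _] := unit1Dz_sqr0 2 x2; have [bU _] := unit1Dz_sqr0 2 y2.
have ab_free := pair_shears_free K0 xy0.
split=> //; first by apply: free_subgroup_gen => // z [] ->.
exact: free_pair_not_cyclic aU bU (pair_shears_neq K0 xy0) ab_free.
Qed.

End SquareZeroPair.

Section Endomorphisms.
Variables (K : fieldType) (T : Type).

Record endo := Endo {
  endo_fun :> (T -> K) -> T -> K;
  endoD : forall f g, endo_fun (f \+ g) = endo_fun f \+ endo_fun g;
  endoZ : forall k f, endo_fun (fun t => k * f t) = (fun t => k * endo_fun f t) }.

Lemma endoP (F G : endo) : (forall f t, F f t = G f t) -> F = G.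
Proof.
case: F G => [F FD FZ] [G GD GZ] /= FG.
have {FG} eqFG : F = G by apply: funext => f; apply: funext; exact: FG.
by subst G; congr Endo; apply: Prop_irrelevance.
Qed.

Program Definition endo0 : endo := @Endo (fun _ _ => 0) _ _.
Next Obligation. by apply: funext => t /=; rewrite addr0. Qed.
Next Obligation. by apply: funext => t; rewrite mulr0. Qed.

Program Definition endoN (F : endo) : endo := @Endo (fun f t => - F f t) _ _.
Next Obligation. by apply: funext => t; rewrite endoD opprD. Qed.
Next Obligation. by apply: funext => t; rewrite endoZ mulrN. Qed.

Program Definition endo_add (F G : endo) : endo := @Endo (fun f t => F f t + G f t) _ _.
Next Obligation. by apply: funext => t; rewrite !endoD addrACA. Qed.
Next Obligation. by apply: funext => t; rewrite !endoZ mulrDr. Qed.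

Definition endo1 : endo := @Endo (fun f => f) (fun _ _ => erefl) (fun _ _ => erefl).

Program Definition endo_mul (F G : endo) : endo := @Endo (fun f => F (G f)) _ _.
Next Obligation. by rewrite !endoD. Qed.
Next Obligation. by rewrite !endoZ. Qed.

Program Definition endo_scale (k : K) (F : endo) : endo :=
  @Endo (fun f t => k * F f t) _ _.
Next Obligation. by apply: funext => t; rewrite endoD mulrDr. Qed.
Next Obligation. by apply: funext => t; rewrite endoZ mulrCA. Qed.

End Endomorphisms.

HB.instance Definition _ K T := gen_eqMixin (endo K T).
HB.instance Definition _ K T := gen_choiceMixin (endo K T).

Section EndoZmodule.
Variables (K : fieldType) (T : Type).
Local Notation endo := (endo K T).

Lemma endo_addA : associative (@endo_add K T).
Proof. by move=> F G H; apply: endoP => f t /=; rewrite addrA. Qed.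
Lemma endo_addC : commutative (@endo_add K T).
Proof. by move=> F G; apply: endoP => f t /=; rewrite addrC. Qed.
Lemma endo_add0 : left_id (@endo0 K T) (@endo_add K T).
Proof. by move=> F; apply: endoP => f t /=; rewrite add0r. Qed.
Lemma endo_addN : left_inverse (@endo0 K T) (@endoN K T) (@endo_add K T).
Proof. by move=> F; apply: endoP => f t /=; rewrite addNr. Qed.
HB.instance Definition _ := GRing.isZmodule.Build endo endo_addA endo_addC endo_add0 endo_addN.

End EndoZmodule.

Section EndoAlgebra.
Variables (K : fieldType) (X : Type).
Local Notation endo := (endo K (seq X)).

Lemma endo_mulA : associative (@endo_mul K (seq X)). Proof. by move=> *; apply: endoP. Qed.
Lemma endo_mul1 : left_id (@endo1 K (seq X)) (@endo_mul K (seq X)).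
Proof. by move=> *; apply: endoP. Qed.
Lemma endo_mulr1 : right_id (@endo1 K (seq X)) (@endo_mul K (seq X)).
Proof. by move=> *; apply: endoP. Qed.
Lemma endo_mulDl : left_distributive (@endo_mul K (seq X)) +%R.
Proof. by move=> *; apply: endoP. Qed.
Lemma endo_mulDr : right_distributive (@endo_mul K (seq X)) +%R.
Proof. by move=> F G H; apply: endoP => f t /=; rewrite endoD. Qed.
Lemma endo1_neq0 : @endo1 K (seq X) != 0.
Proof. by apply/eqP => /(congr1 (fun F : endo => F (fun _ => 1) [::])); apply/eqP/oner_neq0. Qed.
HB.instance Definition _ :=
  GRing.Zmodule_isNzRing.Build endo endo_mulA endo_mul1 endo_mulr1 endo_mulDl endo_mulDr endo1_neq0.

Lemma endo_scaleA a b (F : endo) : endo_scale a (endo_scale b F) = endo_scale (a * b) F.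
Proof. by apply: endoP => f t /=; rewrite mulrA. Qed.
Lemma endo_scale1 : left_id 1 (@endo_scale K (seq X)).
Proof. by move=> F; apply: endoP => f t /=; rewrite mul1r. Qed.
Lemma endo_scaleDr : right_distributive (@endo_scale K (seq X)) +%R.
Proof. by move=> k F G; apply: endoP => f t /=; rewrite mulrDr. Qed.
Lemma endo_scaleDl F : {morph (@endo_scale K (seq X))^~ F : a b / a + b}.
Proof. by move=> a b; apply: endoP => f t /=; rewrite mulrDl. Qed.
HB.instance Definition _ :=
  GRing.Zmodule_isLmodule.Build K endo endo_scaleA endo_scale1 endo_scaleDr endo_scaleDl.

Lemma endo_scaleAl (a : K) (F G : endo) : a *: (F * G) = (a *: F) * G.
Proof. by apply: endoP. Qed.
HB.instance Definition _ := GRing.Lmodule_isLalgebra.Build K endo endo_scaleAl.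

Lemma endo_scaleAr (a : K) (F G : endo) : a *: (F * G) = F * (a *: G).
Proof. by apply: endoP => f t /=; rewrite (endoZ F). Qed.
HB.instance Definition _ := GRing.Lalgebra_isAlgebra.Build K endo endo_scaleAr.

Lemma endo_sumE I (r : seq I) (F : I -> endo) f t :
  (\sum_(i <- r) F i) f t = \sum_(i <- r) F i f t.
Proof. by elim: r => [|i r IH]; rewrite ?big_nil // !big_cons /= IH. Qed.

End EndoAlgebra.

Lemma sum_eq_pick (R : nmodType) (I : eqType) (r : seq I) (x : I) (G : I -> R) :
  uniq r -> \sum_(i <- r) (if x == i then G i else 0) = if x \in r then G x else 0.
Proof.
move=> ur; case: ifPn => xr.
  by rewrite (bigD1_seq x) //= eqxx big1 ?addr0 // => i; rewrite eq_sym => /negbTE->.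
by rewrite big1_seq // => i /andP[_ ir]; case: eqP => // xi; rewrite xi ir in xr.
Qed.

Section PathRepresentation.
Variables (K : fieldType) (V : finType) (Ed : eqType) (s r : Ed -> V) (w : V).
Local Notation endo := (endo K (seq Ed)).

(* A path is the list of its edges and ends at the base vertex w; the empty
   path sits at w.  Vertices act by restriction to the paths with that source,
   [path_edge e] removes a leading e and [path_ghost e] prepends e. *)
Definition path_source (p : seq Ed) := if p is e :: _ then s e else w.
Fixpoint path_to_base (p : seq Ed) : bool :=
  if p is e :: q then (r e == path_source q) && path_to_base q else true.

Program Definition path_vertex (v : V) : endo :=
  @Endo K _ (fun f p => if path_to_base p && (path_source p == v) then f p else 0) _ _.
Next Obligation. by apply: funext => p /=; case: ifP; rewrite ?addr0. Qed.
Next Obligation. by apply: funext => p; case: ifP; rewrite ?mulr0. Qed.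

Program Definition path_edge (e : Ed) : endo :=
  @Endo K _ (fun f p => if p is e' :: q then
                          if (e' == e) && path_to_base p then f q else 0 else 0) _ _.
Next Obligation. by apply: funext => -[|e' p] /=; rewrite ?addr0 //; case: ifP; rewrite ?addr0. Qed.
Next Obligation. by apply: funext => -[|e' p]; rewrite ?mulr0 //; case: ifP; rewrite ?mulr0. Qed.

Program Definition path_ghost (e : Ed) : endo :=
  @Endo K _ (fun f p => if path_to_base (e :: p) then f (e :: p) else 0) _ _.
Next Obligation. by apply: funext => p /=; case: ifP; rewrite ?addr0. Qed.
Next Obligation. by apply: funext => p; case: ifP; rewrite ?mulr0. Qed.

Lemma path_rep_leavitt_family :
  ~ regular_vertex s w -> leavitt_family s r path_vertex path_edge path_ghost.
Proof.
move=> w_irr; split.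
- move=> v v'; apply: endoP => f p /=.
  case: (eqVneq v v') => [<-|vv'] /=; first by case: (_ && _).
  case: (path_to_base p) => //=; case: (eqVneq (path_source p) v) => [->|] //=.
  by rewrite (negbTE vv').
- move=> e; split; apply: endoP => f [|e' p] //=; first by case: ifP.
  + case: (eqVneq e' e) => [->|_] /=; last by case: ifP.
    by rewrite eqxx andbT; case: (_ && _).
  + case: (eqVneq e' e) => [->|_] //=.
    by case: (eqVneq (r e) (path_source p)) => //= _; case: path_to_base.
- move=> e; split; apply: endoP => f p /=.
  + by case: (eqVneq (r e) (path_source p)) => //= _; case: (path_to_base p).
  + by rewrite eqxx andbT; case: (_ && _).
- move=> e e'; apply: endoP => f p /=.
  case: (eqVneq e e') => [_|_] /=; last by case: ifP.
  by rewrite [path_source p == _]eq_sym andbC; case: (_ && _).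
- move=> v l [ul El] l_nz; apply: endoP => f [|e' p] /=; rewrite endo_sumE /=.
  + have -> : (w == v) = false by apply/negbTE/eqP => wv; apply: w_irr; exists l; rewrite -wv in El.
    by rewrite big1.
  + rewrite (eq_bigr (fun e => if e' == e then
        (if (r e' == path_source p) && path_to_base p then
           (if (r e == path_source p) && path_to_base p then f (e :: p) else 0) else 0)
        else 0)); last by move=> e _; case: (e' == e).
    rewrite sum_eq_pick //.
    have -> : (e' \in l) = (s e' == v) by apply/idP/eqP => /El.
    by case: (s e' == v); rewrite ?andbT ?andbF //; case: (_ && _).
Qed.

End PathRepresentation.

Section AlgHom.
Variables (K : fieldType) (A B : algType K) (phi : A -> B).
Hypothesis phi_hom : alg_hom phi.

Lemma alg_hom0 : phi 0 = 0.
Proof.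
by case: phi_hom => phiD _ _; apply: (addrI (phi 0)); rewrite -phiD !addr0.
Qed.

Lemma alg_homB x y : phi (x - y) = phi x - phi y.
Proof.
case: phi_hom => phiD _ _; apply: (addIr (phi y)).
by rewrite -phiD subrK addrNK.
Qed.

Lemma alg_hom_sum I (r : seq I) (F : I -> A) :
  phi (\sum_(i <- r) F i) = \sum_(i <- r) phi (F i).
Proof.
case: phi_hom => phiD _ _.
by elim: r => [|i r IH]; rewrite ?big_nil ?alg_hom0 // !big_cons phiD IH.
Qed.

End AlgHom.

Lemma leavitt_gap_neq0 (K : fieldType) (V : finType) (Ed : eqType) (s r : Ed -> V)
    (A : algType K) (pv : V -> A) (pe ps : Ed -> A) (w : V) (l : seq Ed) :
  is_leavitt_path_algebra s r pv pe ps -> ~ regular_vertex s w ->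
  pv w - \sum_(e <- l) pe e * ps e != 0.
Proof.
(* Evaluate at the indicator of the empty path: [pv w] fixes it and every
   [pe e * ps e] kills it. *)
move=> [_ univ] w_irr.
have [[phi [phi_hom [phi_v [phi_e phi_s]]]] _] :=
  univ _ _ _ _ (path_rep_leavitt_family K r w_irr).
apply/eqP => /(congr1 phi); rewrite alg_homB // alg_hom_sum // alg_hom0 // phi_v.
have [_ _ phiM] := phi_hom.
under eq_bigr do rewrite phiM phi_e phi_s.
move/(congr1 (fun F : endo K (seq Ed) => F (fun p => if p is [::] then 1 else 0) [::])).
by rewrite /= endo_sumE /= big1 // subr0 eqxx; apply/eqP/oner_neq0.
Qed.

Lemma path_geq_target (V : finType) (Ed : eqType) (s r : Ed -> V) u v :
  path_geq s r u v -> u = v \/ exists e, r e = v.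
Proof. by elim=> [|e v' _ [<-|[g <-]]]; [left | right; exists e | right; exists g]. Qed.

Lemma breaking_vertex_in_edge (V : finType) (Ed : eqType) (s r : Ed -> V) H w :
  breaking_vertex s r H w -> (forall u, path_geq s r u w <-> u \notin H) ->
  exists f, r f = w.
Proof.
case=> _ [_ [[|e l] [[_ enum_l] //] _]] reach_w.
have [_ re_nH] := (enum_l e).2 (mem_head _ _).
by case/path_geq_target: ((reach_w (r e)).2 re_nH) => [<-|//]; exists e.
Qed.

Section LeavittFamily.
Variables (K : fieldType) (V : finType) (Ed : eqType) (s r : Ed -> V)
  (A : algType K) (pv : V -> A) (pe ps : Ed -> A).
Hypothesis LF : leavitt_family s r pv pe ps.

Lemma pv_idem v : pv v * pv v = pv v.
Proof. by case: LF => pvM _ _ _ _; rewrite pvM eqxx. Qed.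

Lemma pv_pe v e : pv v * pe e = if v == s e then pe e else 0.
Proof.
case: LF => pvM pe_v _ _ _; have [spe _] := pe_v e.
by rewrite -{1}spe mulrA pvM; case: eqP => [->|]; rewrite ?mul0r.
Qed.

Lemma ps_pv e v : ps e * pv v = if s e == v then ps e else 0.
Proof.
case: LF => pvM _ ps_v _ _; have [_ pss] := ps_v e.
by rewrite -{1}pss -mulrA pvM; case: eqP; rewrite ?mulr0.
Qed.

Lemma ps_pe e f : ps e * pe f = if e == f then pv (r e) else 0.
Proof. by case: LF. Qed.

Lemma pe_pvr e : pe e * pv (r e) = pe e.
Proof. by case: LF => _ pe_v _ _ _; case: (pe_v e). Qed.

Lemma pv_psr e : pv (r e) * ps e = ps e.
Proof. by case: LF => _ _ ps_v _ _; case: (ps_v e). Qed.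

Variables (w : V) (l : seq Ed).
Hypotheses (l_uniq : uniq l) (l_src : forall e, e \in l -> s e = w).
Let S := \sum_(e <- l) pe e * ps e.
Let gap := pv w - S.

Lemma ps_S f : ps f * S = if f \in l then ps f else 0.
Proof.
rewrite /S mulr_sumr (eq_bigr (fun e => if f == e then pv (r f) * ps e else 0)).
  by rewrite sum_eq_pick // pv_psr.
by move=> e _; rewrite mulrA ps_pe; case: eqP => [->|]; rewrite ?mul0r.
Qed.

Lemma S_pe f : S * pe f = if f \in l then pe f else 0.
Proof.
rewrite /S mulr_suml (eq_bigr (fun e => if f == e then pe e * pv (r e) else 0)).
  by rewrite sum_eq_pick // pe_pvr; case: ifP.
by move=> e _; rewrite -mulrA ps_pe eq_sym; case: eqP; rewrite ?mulr0.
Qed.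

Lemma gap_idem : gap * gap = gap.
Proof.
have pvS : pv w * S = S.
  by rewrite /S mulr_sumr; apply: eq_big_seq => e el; rewrite mulrA pv_pe (l_src el) eqxx.
have Spv : S * pv w = S.
  by rewrite /S mulr_suml; apply: eq_big_seq => e el; rewrite -mulrA ps_pv (l_src el) eqxx.
have SS : S * S = S.
  by rewrite {1}/S mulr_suml; apply: eq_big_seq => e el; rewrite -mulrA ps_S el.
by rewrite /gap mulrBl !mulrBr pv_idem pvS Spv SS subrr subr0.
Qed.

Lemma gap_pv : gap * pv w = gap.
Proof.
rewrite /gap mulrBl pv_idem; congr (_ - _).
by rewrite /S mulr_suml; apply: eq_big_seq => e el; rewrite -mulrA ps_pv (l_src el) eqxx.
Qed.

Lemma gap_edge_relations f : r f = w -> (s f == w) = (f \in l) ->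
  let x := gap * ps f in let y := pe f * gap in
  [/\ x * x = 0, y * y = 0, x * y * x = x, y * x * y = y & x * y = gap].
Proof.
move=> rf f_l x y.
have ps_gap : ps f * gap = 0 by rewrite /gap mulrBr ps_pv ps_S f_l subrr.
have gap_pe : gap * pe f = 0 by rewrite /gap mulrBl pv_pe S_pe eq_sym f_l subrr.
have xy : x * y = gap.
  by rewrite /x /y mulrA -(mulrA _ (ps f)) ps_pe eqxx rf gap_pv gap_idem.
split=> //.
- by rewrite /x mulrA -(mulrA gap) ps_gap mulr0 mul0r.
- by rewrite /y mulrA -(mulrA (pe f)) gap_pe mulr0 mul0r.
- by rewrite xy /x mulrA gap_idem.
- by rewrite -mulrA xy /y -mulrA gap_idem.
Qed.

End LeavittFamily.

Theorem theorem4p5 (K : fieldType) (V : finType) (Ed : eqType) (s r : Ed -> V)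
    (A : unitAlgType K) (pv : V -> A) (pe ps : Ed -> A)
    (H : {set V}) (w : V) :
  [pchar K] =i pred0 ->
  is_leavitt_path_algebra s r pv pe ps ->
  hereditary s r H -> saturated s r H ->
  breaking_vertex s r H w ->
  (forall u, path_geq s r u w <-> u \notin H) ->
  let P := ideal_generated
             (IHS_generators s r pv pe ps H
                (fun v => breaking_vertex s r H v /\ v <> w)) in
  (exists x y : A, ~ P (x * y - y * x)) ->
  forall l : seq Ed, enumerates (fun e => s e = w /\ r e \notin H) l ->
  let wH := pv w - \sum_(e <- l) pe e * ps e in
  exists f : Ed, r f = w /\
    let a := 1 + 2%:R * (wH * ps f) in
    let b := 1 + 2%:R * (pe f * wH) in
    [/\ a \is a GRing.unit, b \is a GRing.unit,
        free_subgroup (subgroup_gen (fun x => x = a \/ x = b)) &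
        ~ cyclic_subgroup (subgroup_gen (fun x => x = a \/ x = b))].
Proof.
move=> K0 LPA _ _ w_brk reach_w P _ l [l_uniq l_enum] wH.
have [f rf] := breaking_vertex_in_edge w_brk reach_w.
have [w_nH [w_inf _]] := w_brk.
have l_src e : e \in l -> s e = w by case/l_enum.
have f_l : (s f == w) = (f \in l).
  by apply/eqP/idP => [sf | /l_enum[] //]; apply/l_enum; rewrite rf.
have wH0 : wH != 0.
  by apply: leavitt_gap_neq0 LPA _ => -[l' [l'_enum _]]; apply: w_inf; exists l'.
have [x2 y2 xyx yxy xy] := gap_edge_relations LPA.1 l_uniq l_src rf f_l.
exists f; split=> //.
by apply: pair_shears_free_group x2 y2 xyx yxy K0 _; rewrite xy.
Qed.
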